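(* Let $\mathbf{A}\in\mathbb{C}^{M\times N_a}$ and $\mathbf{B}\in\mathbb{C}^{M\times N_b}$ have unit-$\ell_2$-norm columns, with coherence parameters $\mu_a,\mu_b,\mu_m$. Let $\mathbf{z}=\mathbf{A}\mathbf{x}+\mathbf{B}\mathbf{e}+\mathbf{n}$ with $\mathbf{x}\in\mathbb{C}^{N_a}$, $\mathbf{e}\in\mathbb{C}^{N_b}$ with support $\mathcal{E}=\mathrm{supp}(\mathbf{e})$, $|\mathcal{E}|=n_e$, known, and $\|\mathbf{n}\|_2\le\varepsilon$. Let $n_x\ge1$ and $\mathcal{X}=\mathrm{supp}_{n_x}(\mathbf{x})$. If $$2n_xn_e\mu_m^2< f(2n_x,n_e)=[1-\mu_a(2n_x-1)]^+\,[1-\mu_b(n_e-1)]^+,$$ then, with $\mathbf{R}_{\mathcal{E}}=\mathbf{I}_M-\mathbf{B}_{\mathcal{E}}\mathbf{B}_{\mathcal{E}}^\dagger$ and any $\eta\ge\varepsilon$, every solution $\hat{\mathbf{x}}$ of $$\text{minimize }\|\tilde{\mathbf{x}}\|_1\ \text{ subject to }\ \|\mathbf{R}_{\mathcal{E}}(\mathbf{z}-\mathbf{A}\tilde{\mathbf{x}})\|_2\le\eta$$ satisfies $$\|\mathbf{x}-\hat{\mathbf{x}}\|_2\le C_5(\varepsilon+\eta)+C_6\|\mathbf{x}-\mathbf{x}_{\mathcal{X}}\|_1,$$ where $C_5,C_6\ge0$ depend only on $\mu_a,\mu_b,\mu_m,n_x,n_e$.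
   Context: Coherence parameters: $\mu_a=\max_{k\ne\ell}|\mathbf{a}_k^H\mathbf{a}_\ell|$, $\mu_b=\max_{k\ne\ell}|\mathbf{b}_k^H\mathbf{b}_\ell|$, $\mu_m=\max_{k,\ell}|\mathbf{a}_k^H\mathbf{b}_\ell|$, where $\mathbf{a}_k,\mathbf{b}_\ell$ are the columns of $\mathbf{A},\mathbf{B}$. $[x]^+=\max\{x,0\}$. $\mathbf{B}_{\mathcal{E}}$ is the submatrix of columns of $\mathbf{B}$ indexed by $\mathcal{E}$, $\mathbf{M}^\dagger=(\mathbf{M}^H\mathbf{M})^{-1}\mathbf{M}^H$. $\mathbf{x}_{\mathcal{S}}$ is $\mathbf{x}$ with entries outside $\mathcal{S}$ set to zero. $\mathrm{supp}_n(\mathbf{x})$ denotes an index set of size $n$ minimizing $\|\mathbf{x}-\mathbf{x}_{\tilde{\mathcal{X}}}\|_1$ over all index sets $\tilde{\mathcal X}$ of size $n$. *)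

From HB Require Import structures.
From mathcomp Require Import all_boot all_order all_algebra.
Set Implicit Arguments. Unset Strict Implicit. Unset Printing Implicit Defensive.
Import Order.TTheory GRing.Theory Num.Theory.
Local Open Scope ring_scope.

Section Defs.
Variable C : numClosedFieldType.

Definition adjmx m n (A : 'M[C]_(m, n)) : 'M[C]_(n, m) := (map_mx Num.conj A)^T.

Definition norm1 n (v : 'cV[C]_n) : C := \sum_i `|v i 0|.
Definition norm2 n (v : 'cV[C]_n) : C := sqrtC (\sum_i `|v i 0| ^+ 2).

Definition pospart (x : C) : C := Num.max x 0.

Definition colip m na nb (A : 'M[C]_(m, na)) (B : 'M[C]_(m, nb))
  (k : 'I_na) (l : 'I_nb) : C := (adjmx (col k A) *m col l B) 0 0.

Definition mu_self m n (A : 'M[C]_(m, n)) : C :=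
  \big[Num.max/0]_(k < n) \big[Num.max/0]_(l < n | l != k) `|colip A A k l|.
Definition mu_mutual m na nb (A : 'M[C]_(m, na)) (B : 'M[C]_(m, nb)) : C :=
  \big[Num.max/0]_(k < na) \big[Num.max/0]_(l < nb) `|colip A B k l|.

Definition restrict n (x : 'cV[C]_n) (S : {set 'I_n}) : 'cV[C]_n :=
  \col_i (if i \in S then x i 0 else 0).

Definition is_supp_n n (k : nat) (x : 'cV[C]_n) (X : {set 'I_n}) : Prop :=
  #|X| = k /\
  forall Y : {set 'I_n}, #|Y| = k -> norm1 (x - restrict x X) <= norm1 (x - restrict x Y).

(* B_E : submatrix of columns of B indexed by E (in increasing order) *)
Definition subcols m n (B : 'M[C]_(m, n)) (E : {set 'I_n}) : 'M[C]_(m, #|E|) :=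
  colsub (@enum_val _ (mem E)) B.

Definition pinv m n (M : 'M[C]_(m, n)) : 'M[C]_(n, m) :=
  invmx (adjmx M *m M) *m adjmx M.

Definition projE m n (B : 'M[C]_(m, n)) (E : {set 'I_n}) : 'M[C]_m :=
  1%:M - subcols B E *m pinv (subcols B E).

End Defs.

(* Write h = x - xhat and P = R_E, the orthogonal projector onto the
   complement of the span of B_E.  The proof has three ingredients.
   1. P is a self-adjoint contraction that annihilates B e (Gram matrix of
      B_E invertible by a Gershgorin-type bound), so P(z - A x) = P n has
      norm at most eps and P(z - A xhat) norm at most eta; hence every projected column
      P a_i has |<P a_i, P A h>| <= eps + eta.
   2. The projected Gram matrix of A is diagonally dominant: its diagonal is
      at least 1 - rho and its off-diagonal entries at most mu_a + rho, where
      rho = n_e mu_m^2 / (1 - mu_b (n_e - 1)) bounds ||(I - P) a_i||^2.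
      This gives a bound on every coordinate of h in terms of ||h||_1.
   3. l1-minimality of xhat puts h in the cone
      ||h_{X^c}||_1 <= ||h_X||_1 + 2 ||x - x_X||_1.
   Summing the coordinate bounds over X and using the cone yields the
   result; the coherence condition is exactly what makes the resulting
   denominator 1 + mu_a - 2 n_x (mu_a + rho) positive. *)
From HB Require Import structures.
From mathcomp Require Import all_boot all_order all_algebra.
From mathcomp Require Import ring.
Set Implicit Arguments. Unset Strict Implicit. Unset Printing Implicit Defensive.
Import Order.TTheory GRing.Theory Num.Theory.
Local Open Scope ring_scope.

Lemma col_mulmx (R : pzRingType) m n p (N : 'M[R]_(m, n)) (K : 'M[R]_(n, p)) j :
  col j (N *m K) = N *m col j K.
Proof. by apply/matrixP=> i k; rewrite !mxE; apply: eq_bigr => l _; rewrite !mxE. Qed.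

Section Hermitian.
Variable C : numClosedFieldType.
Implicit Types (m n p : nat).

Lemma adjmxM m n p (A : 'M[C]_(m, n)) (B : 'M[C]_(n, p)) :
  adjmx (A *m B) = adjmx B *m adjmx A.
Proof. by rewrite /adjmx map_mxM trmx_mul. Qed.

Lemma adjmxK m n (A : 'M[C]_(m, n)) : adjmx (adjmx A) = A.
Proof. by apply/matrixP=> i j; rewrite /adjmx !mxE conjCK. Qed.

Lemma adjmx_inv n (A : 'M[C]_n) : adjmx (invmx A) = invmx (adjmx A).
Proof. by rewrite /adjmx map_invmx trmx_inv. Qed.

Lemma adjmx0 m n : adjmx (0 : 'M[C]_(m, n)) = 0.
Proof. by apply/matrixP=> i j; rewrite /adjmx !mxE conjC0. Qed.

Definition hdot m (u v : 'cV[C]_m) : C := \sum_i (u i 0)^* * v i 0.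
Definition sqnorm m (u : 'cV[C]_m) : C := \sum_i `|u i 0| ^+ 2.

Lemma hdotE m (u v : 'cV[C]_m) : (adjmx u *m v) 0 0 = hdot u v.
Proof. by rewrite !mxE; apply: eq_bigr => i _; rewrite !mxE. Qed.

Lemma hdot_self m (u : 'cV[C]_m) : hdot u u = sqnorm u.
Proof. by apply: eq_bigr => i _; rewrite normCKC. Qed.

Lemma sqnorm_ge0 m (u : 'cV[C]_m) : 0 <= sqnorm u.
Proof. by apply: sumr_ge0 => i _; apply: exprn_ge0. Qed.

Lemma norm2_ge0 m (u : 'cV[C]_m) : 0 <= norm2 u.
Proof. by rewrite sqrtC_ge0 sqnorm_ge0. Qed.

Lemma norm2_sq m (u : 'cV[C]_m) : norm2 u ^+ 2 = sqnorm u.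
Proof. exact: sqrtCK. Qed.

Lemma sqrtC_le (a b : C) : 0 <= a -> a <= b -> sqrtC a <= sqrtC b.
Proof. by move=> a0 ab; rewrite ler_sqrtC // nnegrE (le_trans a0 ab). Qed.

Lemma hdot_adj m n (A : 'M[C]_(m, n)) u v : hdot (A *m u) v = hdot u (adjmx A *m v).
Proof. by rewrite -!hdotE adjmxM mulmxA. Qed.

Lemma hdotC m (u v : 'cV[C]_m) : hdot v u = (hdot u v)^*.
Proof.
rewrite /hdot rmorph_sum; apply: eq_bigr => i _.
by rewrite rmorphM /= conjCK mulrC.
Qed.

Lemma hdotBr m (u v w : 'cV[C]_m) : hdot u (v - w) = hdot u v - hdot u w.
Proof. by rewrite /hdot -sumrB; apply: eq_bigr => i _; rewrite !mxE mulrBr. Qed.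

Lemma hdotBl m (u v w : 'cV[C]_m) : hdot (v - w) u = hdot v u - hdot w u.
Proof.
by rewrite /hdot -sumrB; apply: eq_bigr => i _; rewrite !mxE rmorphB mulrBl.
Qed.

Lemma hdot_mulr m n (u : 'cV[C]_m) (N : 'M[C]_(m, n)) (h : 'cV[C]_n) :
  hdot u (N *m h) = \sum_j hdot u (col j N) * h j 0.
Proof.
rewrite /hdot; under eq_bigr do rewrite mxE mulr_sumr.
rewrite exchange_big /=; apply: eq_bigr => j _; rewrite mulr_suml.
by apply: eq_bigr => i _; rewrite !mxE mulrA.
Qed.

Lemma hdot_mull m n (v : 'cV[C]_m) (N : 'M[C]_(m, n)) (w : 'cV[C]_n) :
  hdot (N *m w) v = \sum_j (w j 0)^* * hdot (col j N) v.
Proof.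
rewrite hdotC hdot_mulr rmorph_sum; apply: eq_bigr => j _.
by rewrite rmorphM /= -hdotC mulrC.
Qed.

(* Cauchy-Schwarz for families of nonnegative reals, via Lagrange's identity
   sum_{i,j} (x_i y_j - x_j y_i)^2 = 2 (sum x^2 sum y^2 - (sum x y)^2). *)
Lemma real_CauchySchwarz (I : finType) (x y : I -> C) :
  (forall i, 0 <= x i) -> (forall i, 0 <= y i) ->
  (\sum_i x i * y i) ^+ 2 <= (\sum_i x i ^+ 2) * (\sum_i y i ^+ 2).
Proof.
move=> x0 y0.
have lagr_ge0 : 0 <= \sum_i \sum_j (x i * y j - x j * y i) ^+ 2.
  apply: sumr_ge0 => i _; apply: sumr_ge0 => j _; rewrite -realEsqr.
  by rewrite rpredB // rpredM // ger0_real.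
have lagr_id : \sum_i \sum_j (x i * y j - x j * y i) ^+ 2 =
   2 * ((\sum_i x i ^+ 2) * (\sum_i y i ^+ 2) - (\sum_i x i * y i) ^+ 2).
  have sym : \sum_i \sum_j (x j ^+ 2 * y i ^+ 2 - x i * y i * (x j * y j)) =
             \sum_i \sum_j (x i ^+ 2 * y j ^+ 2 - x i * y i * (x j * y j)).
    by rewrite exchange_big /=; apply: eq_bigr => i _; apply: eq_bigr => j _; ring.
  transitivity (\sum_i \sum_j (x i ^+ 2 * y j ^+ 2 - x i * y i * (x j * y j))
              + \sum_i \sum_j (x j ^+ 2 * y i ^+ 2 - x i * y i * (x j * y j))).
    rewrite -big_split /=; apply: eq_bigr => i _; rewrite -big_split /=.
    by apply: eq_bigr => j _; ring.
  rewrite sym mulr2n mulrDl mul1r; congr (_ + _);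
    rewrite expr2 !mulr_suml -sumrB; apply: eq_bigr => i _;
    by rewrite !mulr_sumr -sumrB; apply: eq_bigr => j _; ring.
by move: lagr_ge0; rewrite lagr_id pmulr_rge0 ?ltr0n // subr_ge0.
Qed.

Lemma CauchySchwarz_hdot m (u v : 'cV[C]_m) : `|hdot u v| ^+ 2 <= sqnorm u * sqnorm v.
Proof.
apply: le_trans (real_CauchySchwarz (fun i => normr_ge0 (u i 0))
                                    (fun i => normr_ge0 (v i 0))).
rewrite ler_pXn2r ?nnegrE ?sumr_ge0 //; last by move=> i _; rewrite mulr_ge0.
apply: le_trans (ler_norm_sum _ _ _) _; apply: ler_sum => i _.
by rewrite normrM norm_conjC.
Qed.

Lemma hdot_le_norm2 m (u v : 'cV[C]_m) : `|hdot u v| <= norm2 u * norm2 v.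
Proof.
rewrite -(ler_pXn2r (n := 2)) ?nnegrE ?mulr_ge0 ?norm2_ge0 //.
by rewrite exprMn !norm2_sq CauchySchwarz_hdot.
Qed.

Lemma norm2_le_norm1 m (u : 'cV[C]_m) : norm2 u <= norm1 u.
Proof.
have sq_le : sqnorm u <= norm1 u ^+ 2.
  rewrite expr2 /norm1 mulr_suml; apply: ler_sum => i _.
  rewrite expr2; apply: ler_wpM2l => //.
  by rewrite (bigD1 i) //= lerDl; apply: sumr_ge0.
have norm1_ge0 : 0 <= norm1 u by apply: sumr_ge0.
by rewrite -(sqrCK norm1_ge0) sqrtC_le ?sqnorm_ge0.
Qed.

End Hermitian.

Section Coherence.
Variable C : numClosedFieldType.

(* A finite maximum of nonnegative terms, started at 0, is nonnegative and
   dominates each term; the order on C is not total, so this is proved by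
   hand. *)
Lemma bigmax_nonneg (I : eqType) (r : seq I) (P : pred I) (F : I -> C) :
  (forall i, 0 <= F i) ->
  0 <= \big[Num.max/0]_(i <- r | P i) F i /\
  forall j, j \in r -> P j -> F j <= \big[Num.max/0]_(i <- r | P i) F i.
Proof.
move=> F0; elim: r => [|a r [IH0 IH]]; first by rewrite big_nil.
have max_ub (u v : C) : 0 <= u -> 0 <= v ->
    [/\ u <= Num.max u v, v <= Num.max u v & 0 <= Num.max u v].
  move=> u0 v0; rewrite /Order.max; case: ifP => [/ltW uv|/negbT nuv] //.
  by have vu : v <= u by rewrite real_leNgt ?ger0_real.
rewrite big_cons; case Pa: (P a).
  have [Fa_le r_le max0] := max_ub _ _ (F0 a) IH0.
  split => // j; rewrite inE => /orP[/eqP->|jr] Pj //.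
  exact: le_trans (IH j jr Pj) r_le.
split => // j; rewrite inE => /orP[/eqP->|jr] Pj; first by rewrite Pa in Pj.
exact: IH.
Qed.

Lemma bigmax_ge0 (I : finType) (P : pred I) (F : I -> C) :
  (forall i, 0 <= F i) -> 0 <= \big[Num.max/0]_(i | P i) F i.
Proof. by move=> F0; have [] := bigmax_nonneg (index_enum I) P F0. Qed.

Lemma le_bigmax (I : finType) (P : pred I) (F : I -> C) j :
  (forall i, 0 <= F i) -> P j -> F j <= \big[Num.max/0]_(i | P i) F i.
Proof.
move=> F0 Pj; have [_ ub] := bigmax_nonneg (index_enum I) P F0.
by apply: ub; rewrite ?mem_index_enum.
Qed.

Lemma colipE m na nb (A : 'M[C]_(m, na)) (B : 'M[C]_(m, nb)) k l :
  colip A B k l = hdot (col k A) (col l B).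
Proof. exact: hdotE. Qed.

Lemma mu_self_ge0 m n (A : 'M[C]_(m, n)) : 0 <= mu_self A.
Proof. by apply: bigmax_ge0 => k; apply: bigmax_ge0. Qed.

Lemma mu_mutual_ge0 m na nb (A : 'M[C]_(m, na)) (B : 'M[C]_(m, nb)) :
  0 <= mu_mutual A B.
Proof. by apply: bigmax_ge0 => k; apply: bigmax_ge0. Qed.

Lemma mu_self_ge m n (A : 'M[C]_(m, n)) k l : l != k ->
  `|hdot (col k A) (col l A)| <= mu_self A.
Proof.
move=> lk; rewrite -colipE.
apply: le_trans (_ : _ <= \big[Num.max/0]_(l < n | l != k) `|colip A A k l|) _.
  exact: (le_bigmax (P := fun l => l != k) (F := fun l => `|colip A A k l|)).
apply: (le_bigmax (P := xpredT)
  (F := fun k => \big[Num.max/0]_(l < n | l != k) `|colip A A k l|)) => // i.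
exact: bigmax_ge0.
Qed.

Lemma mu_mutual_ge m na nb (A : 'M[C]_(m, na)) (B : 'M[C]_(m, nb)) k l :
  `|hdot (col k A) (col l B)| <= mu_mutual A B.
Proof.
rewrite -colipE.
apply: le_trans (_ : _ <= \big[Num.max/0]_(l < nb) `|colip A B k l|) _.
  exact: (le_bigmax (P := xpredT) (F := fun l => `|colip A B k l|)).
apply: (le_bigmax (P := xpredT)
  (F := fun k => \big[Num.max/0]_(l < nb) `|colip A B k l|)) => // i.
exact: bigmax_ge0.
Qed.

End Coherence.

Section Projector.
Variable C : numClosedFieldType.
Variables (M Nb : nat) (B : 'M[C]_(M, Nb)) (E : {set 'I_Nb}).
Local Notation S := (subcols B E).
Local Notation G := (adjmx S *m S).
Local Notation Q := (S *m pinv S).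
Local Notation P := (projE B E).

Hypothesis G_unit : G \in unitmx.

Lemma adjQ : adjmx Q = Q.
Proof.
have adjG : adjmx G = G by rewrite adjmxM adjmxK.
by rewrite /pinv !adjmxM adjmxK adjmx_inv adjG mulmxA.
Qed.

Lemma QS : Q *m S = S.
Proof. by rewrite /pinv -!mulmxA mulVmx // mulmx1. Qed.

Lemma QQ : Q *m Q = Q.
Proof. by rewrite mulmxA QS. Qed.

Lemma PS : P *m S = 0.
Proof. by rewrite /projE mulmxBl mul1mx QS subrr. Qed.

Lemma PE (u : 'cV[C]_M) : P *m u = u - Q *m u.
Proof. by rewrite /projE mulmxBl mul1mx mulmxA. Qed.

Lemma hdotQQ (u v : 'cV[C]_M) : hdot (Q *m u) (Q *m v) = hdot u (Q *m v).
Proof. by rewrite hdot_adj adjQ mulmxA QQ. Qed.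

Lemma hdotP (u v : 'cV[C]_M) :
  hdot (P *m u) (P *m v) = hdot u v - hdot (Q *m u) (Q *m v).
Proof.
rewrite !PE hdotBl !hdotBr hdotQQ.
have -> : hdot (Q *m u) v = hdot u (Q *m v) by rewrite hdot_adj adjQ.
ring.
Qed.

Lemma norm2P_le (u : 'cV[C]_M) : norm2 (P *m u) <= norm2 u.
Proof.
apply: sqrtC_le (sqnorm_ge0 _) _.
by rewrite -!hdot_self hdotP !hdot_self lerBlDr lerDl sqnorm_ge0.
Qed.

Lemma projE_support (e : 'cV[C]_Nb) :
  (forall l, l \notin E -> e l 0 = 0) -> P *m (B *m e) = 0.
Proof.
move=> e_supp.
have -> : B *m e = S *m \col_k e (enum_val k) 0.
  apply/matrixP => i j; rewrite (ord1 j) !mxE.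
  rewrite (bigID (mem E)) /= [X in _ + X]big1 ?addr0; last first.
    by move=> l /e_supp ->; rewrite mulr0.
  by rewrite big_enum_val; apply: eq_bigr => k _; rewrite !mxE.
by rewrite mulmxA PS mul0mx.
Qed.

End Projector.

Section Gram.
Variable C : numClosedFieldType.
Variables (M Nb : nat) (B : 'M[C]_(M, Nb)) (E : {set 'I_Nb}).
Hypothesis B_unit_cols : forall l, norm2 (col l B) = 1.
Local Notation S := (subcols B E).
Local Notation G := (adjmx S *m S).
Local Notation beta := (1 - mu_self B * (#|E|%:R - 1)).

Lemma col_subcols k : col k S = col (enum_val k) B.
Proof. exact: col_colsub. Qed.

Lemma square_sum_split (I : finType) (w : I -> C) :
  (\sum_i `|w i|) ^+ 2 =
  \sum_i `|w i| ^+ 2 + \sum_k \sum_(l | l != k) `|w k| * `|w l|.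
Proof.
rewrite expr2 mulr_suml -big_split /=; apply: eq_bigr => k _.
by rewrite mulr_sumr (bigD1 k) //= expr2.
Qed.

(* Cauchy-Schwarz against the all-ones vector: ||w||_1^2 <= n ||w||_2^2. *)
Lemma norm1_sq_le n (w : 'cV[C]_n) : norm1 w ^+ 2 <= sqnorm w * n%:R.
Proof.
have := real_CauchySchwarz (fun k => normr_ge0 (w k 0)) (fun _ : 'I_n => ler01).
have -> : \sum_k `|w k 0| * 1 = norm1 w by apply: eq_bigr => k _; rewrite mulr1.
have -> : \sum_(k < n) (1 : C) ^+ 2 = n%:R.
  by rewrite (eq_bigr (fun _ => 1)) ?sumr_const ?card_ord // => k _; rewrite expr1n.
by [].
Qed.

(* Gershgorin-type lower bound: the Gram matrix of the n_e unit columns of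
   B_E has smallest eigenvalue at least 1 - mu_b (n_e - 1). *)
Lemma gram_lower_bound (w : 'cV[C]_#|E|) : beta * sqnorm w <= sqnorm (S *m w).
Proof.
set mb := mu_self B.
pose R := \sum_k \sum_(l | l != k)
            (w k 0)^* * (hdot (col k S) (col l S) * w l 0).
pose cross := \sum_k \sum_(l | l != k) `|w k 0| * `|w l 0|.
have diag_split : sqnorm (S *m w) = sqnorm w + R.
  rewrite -hdot_self hdot_mull /sqnorm /R -big_split /=; apply: eq_bigr => k _.
  rewrite hdot_mulr mulr_sumr (bigD1 k) //=; congr (_ + _).
  by rewrite hdot_self col_subcols -norm2_sq B_unit_cols expr1n mul1r normCKC.
have R_le : `|R| <= mb * cross.
  apply: le_trans (ler_norm_sum _ _ _) _; rewrite mulr_sumr; apply: ler_sum => k _.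
  apply: le_trans (ler_norm_sum _ _ _) _; rewrite mulr_sumr; apply: ler_sum => l lk.
  rewrite !normrM norm_conjC mulrCA; apply: ler_wpM2r; first by rewrite mulr_ge0.
  rewrite !col_subcols; apply: mu_self_ge.
  by apply: contra lk => /eqP /enum_val_inj ->.
have cross_le : cross <= sqnorm w * (#|E|%:R - 1).
  have := norm1_sq_le w; rewrite /norm1 square_sum_split -/cross.
  by rewrite mulrBr mulr1 -lerBrDl.
have R_ge : - `|R| <= R.
  have R_real : R \is Num.real.
    have -> : R = sqnorm (S *m w) - sqnorm w by rewrite diag_split addrC addKr.
    by rewrite rpredB // ger0_real // sqnorm_ge0.
  by rewrite lerNl -normrN real_ler_norm ?rpredN.
rewrite diag_split mulrBl mul1r -lerBlDl; apply: le_trans R_ge.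
rewrite addrAC subrr add0r lerN2; apply: le_trans R_le _.
by rewrite -mulrA ler_wpM2l ?mu_self_ge0 // mulrC.
Qed.

Lemma gram_unit : 0 < beta -> G \in unitmx.
Proof.
move=> beta_gt0; rewrite -row_free_unit; apply: inj_row_free => v vG.
set w := adjmx v.
have Gw : G *m w = 0.
  by rewrite /w -[G]adjmxK adjmxM adjmxK -adjmxM vG adjmx0.
have Sw0 : sqnorm (S *m w) = 0.
  rewrite -hdot_self hdot_adj mulmxA Gw /hdot big1 // => i _.
  by rewrite [in X in _ * X]mxE mulr0.
have w_sq0 : sqnorm w = 0.
  have := gram_lower_bound w; rewrite Sw0 pmulr_rle0 // => le0.
  by apply/eqP; rewrite eq_le le0 sqnorm_ge0.
have w0 : w = 0.
  apply/matrixP => i j; rewrite (ord1 j).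
  have := psumr_eq0P (fun i _ => exprn_ge0 2 (normr_ge0 (w i 0))) w_sq0 (i := i) isT.
  by move/eqP; rewrite expf_eq0 /= normr_eq0 => /eqP ->; rewrite mxE.
by rewrite -(adjmxK v) -/w w0 adjmx0.
Qed.

Lemma span_component_bound (a : 'cV[C]_M) (mm : C) :
  0 < beta -> 0 <= mm -> (forall l, `|hdot (col l B) a| <= mm) ->
  sqnorm (S *m pinv S *m a) <= #|E|%:R * mm ^+ 2 / beta.
Proof.
move=> beta_gt0 mm0 inner_le.
have Gu := gram_unit beta_gt0.
set w := invmx G *m (adjmx S *m a).
have Qa : S *m pinv S *m a = S *m w by rewrite /pinv /w !mulmxA.
set q := sqnorm (S *m pinv S *m a).
have q0 : 0 <= q by apply: sqnorm_ge0.
have q_dot : q = hdot (adjmx S *m a) w.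
  by rewrite /q -hdot_self (hdotQQ Gu) Qa hdot_adj adjmxK.
have q_CS : q ^+ 2 <= sqnorm (adjmx S *m a) * sqnorm w.
  by rewrite -{1}(ger0_norm q0) q_dot CauchySchwarz_hdot.
have Sa_le : sqnorm (adjmx S *m a) <= #|E|%:R * mm ^+ 2.
  rewrite mulr_natl -[X in _ *+ X]card_ord -sumr_const; apply: ler_sum => k _.
  rewrite ler_pXn2r ?nnegrE //.
  have -> : (adjmx S *m a) k 0 = hdot (col k S) a.
    by rewrite -hdotE !mxE; apply: eq_bigr => i _; rewrite !mxE.
  by rewrite col_subcols.
have w_le : beta * sqnorm w <= q by rewrite /q Qa gram_lower_bound.
rewrite ler_pdivlMr //.
have [->|q_neq0] := eqVneq q 0; first by rewrite mul0r mulr_ge0 ?exprn_ge0.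
have q_gt0 : 0 < q by rewrite lt_def q_neq0 q0.
rewrite -(ler_pM2r q_gt0) mulrAC -expr2.
apply: le_trans (_ : #|E|%:R * mm ^+ 2 * sqnorm w * beta <= _).
  rewrite ler_pM2r //.
  exact: le_trans q_CS (ler_wpM2r (sqnorm_ge0 w) Sa_le).
by rewrite -mulrA ler_wpM2l ?mulr_ge0 ?exprn_ge0 // mulrC.
Qed.

End Gram.

Section Estimates.
Variable C : numClosedFieldType.

Lemma pospart_prod_gt (a b c : C) : a \is Num.real -> b \is Num.real -> 0 <= c ->
  c < pospart a * pospart b -> [/\ 0 < a, 0 < b & c < a * b].
Proof.
move=> a_real b_real c0; rewrite /pospart /Order.max.
case: ifP => [_|/negbT a_pos]; first by rewrite mul0r => /(le_lt_trans c0); rewrite ltxx.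
case: ifP => [_|/negbT b_pos]; first by rewrite mulr0 => /(le_lt_trans c0); rewrite ltxx.
rewrite -real_leNgt ?real0 // in a_pos; rewrite -real_leNgt ?real0 // in b_pos.
move=> c_lt; split => //; rewrite lt_def ?a_pos ?b_pos andbT; apply/eqP => ab0;
  by move: c_lt; rewrite ab0 (mul0r, mulr0) => /(le_lt_trans c0); rewrite ltxx.
Qed.

Lemma diag_dominant_coord (I : finType) (g h : I -> C) (i : I) (d c delta : C) :
  0 <= g i -> d <= g i -> (forall j, j != i -> `|g j| <= c) ->
  `|\sum_j g j * h j| <= delta ->
  (d + c) * `|h i| <= delta + c * \sum_j `|h j|.
Proof.
move=> gi0 d_le off_le row_le.
have off_sum : `|\sum_(j | j != i) g j * h j| <= c * \sum_(j | j != i) `|h j|.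
  apply: le_trans (ler_norm_sum _ _ _) _; rewrite mulr_sumr; apply: ler_sum => j ji.
  by rewrite normrM ler_wpM2r // off_le.
have diag_le : g i * `|h i| <= delta + c * \sum_(j | j != i) `|h j|.
  rewrite -(ger0_norm gi0) -normrM.
  have -> : g i * h i = \sum_j g j * h j - \sum_(j | j != i) g j * h j.
    by rewrite (bigD1 i) //= addrK.
  by apply: le_trans (ler_normB _ _) _; apply: lerD.
rewrite (bigD1 i) //= mulrDl mulrDr addrCA [d * _ + _]addrC lerD2l.
exact: le_trans (ler_wpM2r (normr_ge0 _) d_le) diag_le.
Qed.

Lemma norm1_restrict_compl n (x : 'cV[C]_n) (X : {set 'I_n}) :
  norm1 (x - restrict x X) = \sum_(i | i \notin X) `|x i 0|.
Proof.
rewrite /norm1 (bigID (mem X)) /= big1 ?add0r => [|i iX]; last first.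
  by rewrite !mxE iX subrr normr0.
by apply: eq_bigr => i iX; rewrite !mxE (negbTE iX) subr0.
Qed.

Lemma l1_cone n (x y : 'cV[C]_n) (X : {set 'I_n}) :
  norm1 y <= norm1 x ->
  \sum_(i | i \notin X) `|(x - y) i 0| <=
    \sum_(i | i \in X) `|(x - y) i 0| + 2 * norm1 (x - restrict x X).
Proof.
rewrite norm1_restrict_compl /norm1 (bigID (mem X)) [X in _ <= X](bigID (mem X)) /=.
set xX := \sum_(i in X) `|x i 0|; set xXc := \sum_(i | i \notin X) `|x i 0|.
set yX := \sum_(i in X) `|y i 0|; set yXc := \sum_(i | i \notin X) `|y i 0|.
move=> y_le.
have on_X : xX <= yX + \sum_(i in X) `|(x - y) i 0|.
  rewrite -big_split; apply: ler_sum => i _ /=.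
  have -> : x i 0 = y i 0 + (x - y) i 0 by rewrite !mxE addrCA subrr addr0.
  exact: ler_normD.
have off_X : \sum_(i | i \notin X) `|(x - y) i 0| <= xXc + yXc.
  rewrite -big_split; apply: ler_sum => i _ /=; rewrite !mxE.
  exact: ler_normB.
apply: le_trans off_X _.
rewrite mulr2n mulrDl mul1r addrA [xXc + yXc]addrC lerD2r.
apply: le_trans (_ : xX + xXc - yX <= _); first by rewrite lerBrDl.
by rewrite addrAC lerD2r lerBlDl.
Qed.

Lemma error_from_cone (s n delta K D t tc sig : C) :
  D = s - 2 * K -> 0 < D -> 0 <= K ->
  s * t <= n * delta + K * (t + tc) -> tc <= t + 2 * sig ->
  t + tc <= 2 * n / D * delta + (4 * K / D + 2) * sig.
Proof.
move=> D_def D_gt0 K0 supp_le cone.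
have h_le : t + tc <= 2 * t + 2 * sig.
  have -> : 2 * t + 2 * sig = t + (t + 2 * sig) by ring.
  by rewrite lerD2l.
have Dt_le : D * t <= n * delta + 2 * K * sig.
  have st_le : s * t <= n * delta + K * (2 * t + 2 * sig).
    by apply: le_trans supp_le _; rewrite lerD2l ler_wpM2l.
  rewrite D_def mulrBl lerBlDr; apply: le_trans st_le _.
  have -> : n * delta + K * (2 * t + 2 * sig) = n * delta + 2 * K * sig + 2 * K * t.
    by ring.
  by [].
apply: le_trans h_le _.
have -> : 2 * n / D * delta + (4 * K / D + 2) * sig =
          2 * ((n * delta + 2 * K * sig) / D) + 2 * sig.
  by field; rewrite gt_eqF.
by rewrite lerD2r ler_wpM2l // ler_pdivlMr // mulrC.
Qed.

End Estimates.

Section Constants.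
Variable C : numClosedFieldType.
Variables (mua mub mum : C) (nx ne : nat).

(* rho bounds the squared norm of the component of a column of A in
   span(B_E); kappa = n_x (mu_a + rho) is the off-diagonal mass of n_x rows
   of the projected Gram matrix, and denom = 1 + mu_a - 2 kappa. *)
Definition rho : C := ne%:R * mum ^+ 2 / (1 - mub * (ne%:R - 1)).
Definition kappa : C := nx%:R * (mua + rho).
Definition denom : C := 1 + mua - 2 * kappa.

Definition C5f : C := if 0 < denom then 2 * nx%:R / denom else 0.
Definition C6f : C :=
  if (0 < denom) && (0 <= kappa) then 4 * kappa / denom + 2 else 0.

Lemma C5f_C6f_ge0 : 0 <= C5f /\ 0 <= C6f.
Proof.
rewrite /C5f /C6f; split; case: ifP => //.
  by move=> D_gt0; rewrite divr_ge0 ?mulr_ge0 // ltW.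
move=> /andP[D_gt0 K0]; apply: addr_ge0 => //.
by apply: divr_ge0; [exact: mulr_ge0 | exact: ltW].
Qed.

Lemma coherence_condition : 0 <= mua -> 0 <= mub -> 0 <= mum ->
  (2 * nx * ne)%:R * mum ^+ 2 <
    pospart (1 - mua * ((2 * nx)%:R - 1)) * pospart (1 - mub * (ne%:R - 1)) ->
  [/\ 0 < 1 - mub * (ne%:R - 1), 0 <= rho & 0 < denom].
Proof.
move=> mua0 mub0 mum0 cond.
have real_aff (mu : C) k : 0 <= mu -> 1 - mu * (k%:R - 1) \is Num.real.
  by move=> mu0; rewrite rpredB ?rpredM ?rpredB ?ger0_real.
have [alpha_gt0 beta_gt0 prod_gt] := pospart_prod_gt (real_aff _ (2 * nx)%N mua0)
  (real_aff _ ne mub0) (mulr_ge0 (ler0n _ _) (exprn_ge0 2 mum0)) cond.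
have rho0 : 0 <= rho by rewrite divr_ge0 ?mulr_ge0 ?exprn_ge0 // ltW.
split => //.
have -> : denom = 1 - mua * ((2 * nx)%:R - 1) - 2 * nx%:R * rho.
  by rewrite /denom /kappa natrM; ring.
by rewrite subr_gt0 /rho mulrA ltr_pdivrMr // mulrA -!natrM.
Qed.

End Constants.

Section Recovery.
Variable C : numClosedFieldType.
Variables (M Na Nb : nat) (A : 'M[C]_(M, Na)) (B : 'M[C]_(M, Nb)) (E : {set 'I_Nb}).
Hypothesis A_unit_cols : forall k, norm2 (col k A) = 1.
Hypothesis B_unit_cols : forall l, norm2 (col l B) = 1.
Hypothesis beta_gt0 : 0 < 1 - mu_self B * (#|E|%:R - 1).
Local Notation P := (projE B E).
Local Notation Q := (subcols B E *m pinv (subcols B E)).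
Local Notation r := (rho (mu_self B) (mu_mutual A B) #|E|).

Let G_unit := gram_unit B_unit_cols beta_gt0.

Lemma span_component_col k : sqnorm (Q *m col k A) <= r.
Proof.
apply: span_component_bound => //; first exact: mu_mutual_ge0.
by move=> l; rewrite hdotC norm_conjC mu_mutual_ge.
Qed.

Lemma projected_gram_diag i : 1 - r <= hdot (P *m col i A) (P *m col i A).
Proof.
rewrite hdotP // !hdot_self -norm2_sq A_unit_cols expr1n lerD2l lerN2.
exact: span_component_col.
Qed.

Lemma projected_gram_offdiag i j : j != i ->
  `|hdot (P *m col i A) (P *m col j A)| <= mu_self A + r.
Proof.
move=> ji; rewrite hdotP //; apply: le_trans (ler_normB _ _) _.
apply: lerD; first exact: mu_self_ge.
apply: le_trans (hdot_le_norm2 _ _) _.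
have Q_col_le k : norm2 (Q *m col k A) <= sqrtC r.
  exact: sqrtC_le (sqnorm_ge0 _) (span_component_col k).
apply: le_trans (ler_pM (norm2_ge0 _) (norm2_ge0 _) (Q_col_le i) (Q_col_le j)) _.
by rewrite -expr2 sqrtCK.
Qed.

Lemma projected_coord_bound (h : 'cV[C]_Na) (delta : C) :
  (forall i, `|hdot (P *m col i A) (P *m (A *m h))| <= delta) ->
  forall i, (1 + mu_self A) * `|h i 0| <= delta + (mu_self A + r) * norm1 h.
Proof.
move=> corr_le i.
have -> : 1 + mu_self A = (1 - r) + (mu_self A + r) by ring.
apply: (diag_dominant_coord (g := fun j => hdot (P *m col i A) (P *m col j A))).
- by rewrite hdot_self sqnorm_ge0.
- exact: projected_gram_diag.
- exact: projected_gram_offdiag.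
- rewrite (_ : \sum_j _ = hdot (P *m col i A) (P *m (A *m h))) ?corr_le //.
  by rewrite mulmxA hdot_mulr; apply: eq_bigr => j _; rewrite col_mulmx.
Qed.

Lemma projected_residual_truth (x : 'cV[C]_Na) (e : 'cV[C]_Nb) (n : 'cV[C]_M) :
  (forall l, l \notin E -> e l 0 = 0) ->
  P *m (A *m x + B *m e + n - A *m x) = P *m n.
Proof.
move=> e_supp; rewrite addrAC [A *m x + _]addrC addrK mulmxDr projE_support ?add0r //.
Qed.

Lemma projected_correlation (z : 'cV[C]_M) (y y' : 'cV[C]_Na) (eps eta : C) :
  norm2 (P *m (z - A *m y)) <= eps -> norm2 (P *m (z - A *m y')) <= eta ->
  forall i, `|hdot (P *m col i A) (P *m (A *m (y - y')))| <= eps + eta.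
Proof.
move=> res_y res_y' i.
have -> : P *m (A *m (y - y')) = P *m (z - A *m y') - P *m (z - A *m y).
  by rewrite -mulmxBr; congr (_ *m _); rewrite mulmxBr opprB [RHS]addrC addrA subrK.
have Pa_le : norm2 (P *m col i A) <= 1 by rewrite -(A_unit_cols i) norm2P_le.
rewrite hdotBr [eps + eta]addrC; apply: le_trans (ler_normB _ _) _.
apply: lerD; apply: le_trans (hdot_le_norm2 _ _) _;
  by rewrite -[X in _ <= X]mul1r ler_pM ?norm2_ge0.
Qed.

End Recovery.

Theorem theorem3 (C : numClosedFieldType) :
  exists C5 C6 : C -> C -> C -> nat -> nat -> C,
    (forall mua mub mum nx ne, 0 <= C5 mua mub mum nx ne /\ 0 <= C6 mua mub mum nx ne) /\
    forall (M Na Nb : nat) (A : 'M[C]_(M, Na)) (B : 'M[C]_(M, Nb))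
           (x : 'cV[C]_Na) (e : 'cV[C]_Nb) (n z : 'cV[C]_M)
           (E : {set 'I_Nb}) (nx : nat) (X : {set 'I_Na}) (eps eta : C) (xhat : 'cV[C]_Na),
      (forall k, norm2 (col k A) = 1) ->
      (forall l, norm2 (col l B) = 1) ->
      z = A *m x + B *m e + n ->
      (forall i, (e i 0 != 0) = (i \in E)) ->
      norm2 n <= eps ->
      (1 <= nx)%N ->
      is_supp_n nx x X ->
      (2 * nx * #|E|)%:R * mu_mutual A B ^+ 2 <
        pospart (1 - mu_self A * ((2 * nx)%:R - 1))
        * pospart (1 - mu_self B * (#|E|%:R - 1)) ->
      eps <= eta ->
      (* xhat solves: minimize ||x~||_1 s.t. ||R_E (z - A x~)||_2 <= eta *)
      norm2 (projE B E *m (z - A *m xhat)) <= eta ->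
      (forall xt : 'cV[C]_Na, norm2 (projE B E *m (z - A *m xt)) <= eta ->
         norm1 xhat <= norm1 xt) ->
      norm2 (x - xhat) <=
        C5 (mu_self A) (mu_self B) (mu_mutual A B) nx #|E| * (eps + eta)
        + C6 (mu_self A) (mu_self B) (mu_mutual A B) nx #|E| * norm1 (x - restrict x X).
Proof.
exists (@C5f C), (@C6f C); split=> [*|]; first exact: C5f_C6f_ge0.
move=> M Na Nb A B x e n z E nx X eps eta xhat hA hB hz he hn _ [cardX _] cond
  eps_le_eta xhat_feasible xhat_min.
have [beta_gt0 rho0 D_gt0] := coherence_condition (mu_self_ge0 A) (mu_self_ge0 B)
  (mu_mutual_ge0 A B) cond.
have e_supp l : l \notin E -> e l 0 = 0 by rewrite -he => /negbNE/eqP.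
have x_feasible : norm2 (projE B E *m (z - A *m x)) <= eps.
  rewrite hz projected_residual_truth //.
  exact: le_trans (norm2P_le (gram_unit hB beta_gt0) n) hn.
have l1_le : norm1 xhat <= norm1 x by apply/xhat_min/(le_trans x_feasible).
have coord := projected_coord_bound hA hB beta_gt0
  (projected_correlation hA hB beta_gt0 x_feasible xhat_feasible).
have K0 : 0 <= kappa (mu_self A) (mu_self B) (mu_mutual A B) nx #|E|.
  by rewrite mulr_ge0 ?addr_ge0 ?mu_self_ge0.
rewrite /C5f /C6f D_gt0 K0 /=.
apply: le_trans (norm2_le_norm1 _) _; rewrite [norm1 _](bigID (mem X)) /=.
apply: error_from_cone (l1_cone X l1_le) => //.
rewrite mulr_sumr; apply: le_trans (ler_sum _ (fun i _ => coord i)) _.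
rewrite sumr_const cardX -[X in X <= _]mulr_natl /kappa mulrDr mulrA.
by rewrite [norm1 _](bigID (mem X)).
Qed.
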